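(* For all integers $m,n \geq 3$, the toroidal grid $C_m \Box C_n$ is not diametrical, i.e. $\Gamma_b(C_m \Box C_n) \neq \mathrm{diam}(C_m \Box C_n)$.
   Context: $C_k$ is the cycle on $k$ vertices and $\Box$ the Cartesian product of graphs. Let $G=(V,E)$ be a finite connected graph with distance $d(u,v)$, eccentricity $e(v)=\max_w d(v,w)$ and diameter $\mathrm{diam}(G)=\max_v e(v)$. A broadcast is a function $f: V\to\{0,\dots,\mathrm{diam}(G)\}$ with $f(v)\le e(v)$; its cost is $\sum_v f(v)$; it is dominating if every $u$ has some $v$ with $f(v)\ge 1$ and $d(u,v)\le f(v)$; a dominating broadcast is minimal if decreasing $f(v)$ for any $v$ with $f(v)>0$ destroys domination. $\Gamma_b(G)$ is the maximum cost of a minimal dominating broadcast, and $G$ is called diametrical if $\Gamma_b(G)=\mathrm{diam}(G)$. *)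

From mathcomp Require Import all_boot.
Set Implicit Arguments. Unset Strict Implicit. Unset Printing Implicit Defensive.

Section Broadcast.
Variables (T : finType) (e : rel T).

Definition walk_of_length (k : nat) (u v : T) : bool :=
  [exists p : k.-tuple T, path e u p && (last u p == v)].

(* graph distance: least k such that a walk of length k from u to v exists
   (for a connected graph this is < #|T|) *)
Definition dist (u v : T) : nat :=
  find (fun k => walk_of_length k u v) (iota 0 #|T|).

Definition ecc (v : T) : nat := \max_(w : T) dist v w.
Definition diam : nat := \max_(v : T) ecc v.


Definition broadcast_values := {ffun T -> 'I_diam.+1}.

Definition is_broadcast (f : T -> nat) : bool := [forall v, f v <= ecc v].

Definition bcost (f : T -> nat) : nat := \sum_(v : T) f v.

Definition dominating (f : T -> nat) : bool :=
  [forall u, exists v, (0 < f v) && (dist u v <= f v)].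

Definition decr_at (f : T -> nat) (v : T) : T -> nat :=
  fun w => if w == v then (f v).-1 else f w.

Definition minimal_dominating (f : T -> nat) : bool :=
  [&& is_broadcast f, dominating f &
      [forall v, (0 < f v) ==> ~~ dominating (decr_at f v)]].

Definition Gamma_b : nat :=
  \max_(f : broadcast_values | minimal_dominating (fun v => nat_of_ord (f v)))
     bcost (fun v => nat_of_ord (f v)).

Definition diametrical : Prop := Gamma_b = diam.

End Broadcast.

Definition cycle_rel (k : nat) : rel 'I_k :=
  fun i j => (nat_of_ord j == (i.+1 %% k)) || (nat_of_ord i == (j.+1 %% k)).

Definition cart_prod (A B : finType) (eA : rel A) (eB : rel B) : rel (A * B) :=
  fun x y => ((x.1 == y.1) && eB x.2 y.2) || ((x.2 == y.2) && eA x.1 y.1).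

Definition torus (m n : nat) : rel ('I_m * 'I_n) :=
  cart_prod (@cycle_rel m) (@cycle_rel n).
Arguments torus : clear implicits.
Arguments cycle_rel : clear implicits.

(* Placing the value h = floor(m/2) on every vertex of one column {0} x C_n
   dominates the torus, since each vertex is within distance h of its own row's
   copy of 0. It is minimal: lowering the value at (0, b) leaves (h, b)
   undominated, because (h, b) is at distance exactly h from (0, b) and at
   distance at least h + 1 from every other (0, d). Its cost n h exceeds
   floor(m/2) + floor(n/2) >= diam as soon as m, n >= 3. The distance lower
   bounds come from potentials that change by at most 1 along each edge. *)
From mathcomp Require Import all_boot zify.
From Stdlib Require Import FunctionalExtensionality.
Set Implicit Arguments. Unset Strict Implicit. Unset Printing Implicit Defensive.

Section Graph.
Variables (T : finType) (e : rel T).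

Lemma walkP k u v :
  reflect (exists p : seq T, [/\ size p = k, path e u p & last u p = v])
          (walk_of_length e k u v).
Proof.
apply: (iffP existsP) => [[p /andP[ep /eqP <-]] | [p [sz ep <-]]].
  by exists (val p); rewrite size_tuple.
have sz' : size p == k by apply/eqP.
by exists (Tuple sz'); rewrite /= ep eqxx.
Qed.

Lemma walk_cat k l u w v :
  walk_of_length e k u w -> walk_of_length e l w v ->
  walk_of_length e (k + l) u v.
Proof.
move=> /walkP[p [<- ep <-]] /walkP[q [<- eq' <-]].
by apply/walkP; exists (p ++ q); rewrite size_cat cat_path ep eq' last_cat.
Qed.

Lemma walk_iter (s : T -> T) : (forall x, e x (s x)) ->
  forall k x, walk_of_length e k x (iter k s x).
Proof.
move=> es k x; apply/walkP; exists (traject s (s x) k).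
rewrite size_traject last_traject; split=> //.
by apply: sub_path (fpath_traject s x k) => a b /eqP <-.
Qed.

Lemma walk_rev : symmetric e ->
  forall k u v, walk_of_length e k u v -> walk_of_length e k v u.
Proof.
move=> esym k u v /walkP[p [<- ep <-]]; apply/walkP.
exists (rev (belast u p)); split.
- by rewrite size_rev size_belast.
- by rewrite rev_path; apply: sub_path ep => a b; rewrite esym.
- by case: p {ep} => //= x p; rewrite rev_cons last_rcons.
Qed.

Lemma dist_sym : symmetric e -> forall u v, dist e u v = dist e v u.
Proof.
move=> esym u v; apply: eq_find => k.
by apply/idP/idP; apply: walk_rev.
Qed.

Lemma dist_le_walk k u v :
  walk_of_length e k u v -> k < #|T| -> dist e u v <= k.
Proof.
move=> w lt_k; rewrite /dist leqNgt; apply/negP => lt_kd.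
by have := before_find 0 lt_kd; rewrite nth_iota // add0n w.
Qed.

Definition lipschitz (phi : T -> nat) := forall x y, e x y -> phi y <= phi x + 1.

Lemma lipschitz_walk phi : lipschitz phi ->
  forall k u v, walk_of_length e k u v -> phi v <= phi u + k.
Proof.
move=> lip k u v /walkP[p [<- ep <-]].
elim: p u ep => [|x p IHp] u /=; first by rewrite addn0.
by case/andP=> /lip le_ux /IHp; lia.
Qed.

(* The hypothesis covers the junk value dist u v = #|T| when v is unreachable. *)
Lemma lipschitz_dist phi : lipschitz phi ->
  forall u v, phi v <= phi u + #|T| -> phi v <= phi u + dist e u v.
Proof.
move=> lip u v le_T; case: (ltnP (dist e u v) #|T|) => [lt_dT | le_Td].
  apply: (lipschitz_walk lip).
  have has_walk : has (fun k => walk_of_length e k u v) (iota 0 #|T|).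
    by rewrite has_find size_iota.
  by have := nth_find 0 has_walk; rewrite nth_iota // add0n.
by apply: leq_trans le_T _; rewrite leq_add2l.
Qed.

Lemma lipschitz_bool (p : pred T) : lipschitz (fun x => nat_of_bool (p x)).
Proof. by move=> x y _; case: (p x); case: (p y). Qed.

Lemma dist_le_ecc u v : dist e u v <= ecc e u.
Proof. exact: (@leq_bigmax _ (fun w => dist e u w)). Qed.

Lemma ecc_le_diam v : ecc e v <= diam e.
Proof. exact: (@leq_bigmax _ (fun w => ecc e w)). Qed.

Lemma bcost_le_Gamma_b f : minimal_dominating e f -> bcost f <= Gamma_b e.
Proof.
move=> fmin; have /and3P[/forallP f_ecc _ _] := fmin.
pose F : broadcast_values e := [ffun v => inord (f v)].
have FE : (fun v => nat_of_ord (F v)) = f.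
  apply: functional_extensionality => v; rewrite ffunE inordK // ltnS.
  exact: leq_trans (f_ecc v) (ecc_le_diam v).
rewrite /Gamma_b -FE in fmin *.
exact: (@leq_bigmax_cond _
  (fun F : broadcast_values e => minimal_dominating e (fun v => nat_of_ord (F v)))
  (fun F : broadcast_values e => bcost (fun v => nat_of_ord (F v))) F fmin).
Qed.

End Graph.

Section CartProd.
Variables (A B : finType) (eA : rel A) (eB : rel B).
Local Notation eAB := (cart_prod eA eB).

Lemma cart_prod_sym : symmetric eA -> symmetric eB -> symmetric eAB.
Proof.
by move=> symA symB x y; rewrite /cart_prod symA symB (eq_sym x.1) (eq_sym x.2).
Qed.

Lemma walk_cart_prodl k a c b :
  walk_of_length eA k a c -> walk_of_length eAB k (a, b) (c, b).
Proof.
move=> /walkP[p [<- ep <-]]; apply/walkP; exists (map (pair^~ b) p).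
rewrite size_map last_map path_map; split=> //.
by apply: sub_path ep => x y exy; rewrite /cart_prod /= eqxx exy orbT.
Qed.

Lemma walk_cart_prodr k b d a :
  walk_of_length eB k b d -> walk_of_length eAB k (a, b) (a, d).
Proof.
move=> /walkP[p [<- ep <-]]; apply/walkP; exists (map (pair a) p).
rewrite size_map last_map path_map; split=> //.
by apply: sub_path ep => x y exy; rewrite /cart_prod /= eqxx exy.
Qed.

Lemma lipschitz_cart_prod phiA phiB :
  lipschitz eA phiA -> lipschitz eB phiB ->
  lipschitz eAB (fun x => phiA x.1 + phiB x.2).
Proof.
move=> lipA lipB [a b] [c d] /orP[] /andP[/eqP /= <-] /=.
  by move/lipB; lia.
by move/lipA; lia.
Qed.

End CartProd.

Section Cycle.
Variables (k : nat) (k_gt0 : 0 < k).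

Definition cycle_succ (i : 'I_k) : 'I_k := Ordinal (ltn_pmod i.+1 k_gt0).

Lemma cycle_rel_sym : symmetric (cycle_rel k).
Proof. by move=> i j; rewrite /cycle_rel orbC. Qed.

Lemma cycle_rel_succ i : cycle_rel k i (cycle_succ i).
Proof. by rewrite /cycle_rel /= eqxx. Qed.

Lemma val_iter_cycle_succ (i : 'I_k) l : val (iter l cycle_succ i) = (i + l) %% k.
Proof.
elim: l => [|l IHl] /=; first by rewrite addn0 modn_small.
by rewrite IHl -addn1 modnDml -addnA addn1.
Qed.

Lemma cycle_walk_le (i j : 'I_k) : i <= j ->
  walk_of_length (cycle_rel k) (j - i) i j /\
  walk_of_length (cycle_rel k) (k - (j - i)) i j.
Proof.
move=> le_ij; have lt_ik := ltn_ord i; have lt_jk := ltn_ord j.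
have fwd l (x y : 'I_k) : (x + l) %% k = y -> walk_of_length (cycle_rel k) l x y.
  move=> xy; have -> : y = iter l cycle_succ x.
    by apply: val_inj; rewrite val_iter_cycle_succ.
  exact: walk_iter cycle_rel_succ l x.
split; first by apply: fwd; rewrite subnKC // modn_small.
apply: (walk_rev cycle_rel_sym); apply: fwd.
have -> : j + (k - (j - i)) = i + k by lia.
by rewrite modnDr modn_small.
Qed.

Lemma cycle_walk_half (i j : 'I_k) :
  exists2 l, l <= k./2 & walk_of_length (cycle_rel k) l i j.
Proof.
wlog le_ij : i j / i <= j.
  move=> wlog_ij; case: (leqP i j) => [/wlog_ij // | /ltnW /wlog_ij[l le_l w]].
  by exists l; last exact: walk_rev cycle_rel_sym _ _ _ w.
have [w1 w2] := cycle_walk_le le_ij; have lt_jk := ltn_ord j.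
have := odd_double_half k; rewrite -addnn.
case: (leqP (j - i) k./2) => [le_d | lt_d]; first by exists (j - i).
by exists (k - (j - i)) => //; case: (odd k) => /=; lia.
Qed.

Definition cycle_depth (i : nat) := minn i (k - i).

Lemma lipschitz_cycle_depth : lipschitz (cycle_rel k) (fun i : 'I_k => cycle_depth i).
Proof.
move=> i j; have lt_ik := ltn_ord i; have lt_jk := ltn_ord j.
rewrite /cycle_rel /cycle_depth => /orP[] /eqP ->.
- case: (ltnP i.+1 k) => [lt | le]; first by rewrite modn_small; lia.
  have -> : i.+1 = k by lia.
  by rewrite modnn; lia.
- case: (ltnP j.+1 k) => [lt | le]; first by rewrite modn_small; lia.
  have -> : j.+1 = k by lia.
  by rewrite modnn; lia.
Qed.

End Cycle.

Section Torus.
Variables (m n : nat) (m_ge3 : 2 < m) (n_ge3 : 2 < n).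
Local Notation G := (torus m n).

Let m_gt0 : 0 < m. Proof. lia. Qed.
Let n_gt0 : 0 < n. Proof. lia. Qed.
Let h := m./2.
Let h_gt0 : 0 < h.
Proof. by rewrite /h -leq_double -addnn; have := odd_double_half m; lia. Qed.
Let h_lt_m : h < m. Proof. by rewrite /h; have := odd_double_half m; lia. Qed.
Let i0 : 'I_m := Ordinal m_gt0.
Let ih : 'I_m := Ordinal h_lt_m.

Lemma card_torus : #|{: 'I_m * 'I_n}| = m * n.
Proof. by rewrite card_prod !card_ord. Qed.

Lemma torus_sym : symmetric G.
Proof. exact: cart_prod_sym (@cycle_rel_sym m) (@cycle_rel_sym n). Qed.

Lemma diam_torus_le : diam G <= m./2 + n./2.
Proof.
apply/bigmax_leqP => [[a b] _]; apply/bigmax_leqP => [[c d] _].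
have [k1 le_k1 w1] := cycle_walk_half m_gt0 a c.
have [k2 le_k2 w2] := cycle_walk_half n_gt0 b d.
have w := walk_cat (walk_cart_prodl (cycle_rel n) b w1)
                   (walk_cart_prodr (cycle_rel m) c w2).
apply: leq_trans (dist_le_walk w _) _; last by rewrite leq_add.
rewrite card_torus; have := odd_double_half m; have := odd_double_half n; nia.
Qed.

Definition column_broadcast (v : 'I_m * 'I_n) : nat := if v.1 == i0 then h else 0.

Lemma dist_column_lb (j j' : 'I_n) : h + (j != j') <= dist G (i0, j') (ih, j).
Proof.
have := lipschitz_dist (lipschitz_cart_prod (lipschitz_cycle_depth m_gt0)
  (@lipschitz_bool _ (cycle_rel n) (fun y => y != j'))) (u := (i0, j')) (v := (ih, j)).
rewrite /cycle_depth /= eqxx subn0 min0n /=.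
have -> : minn h (m - h) = h by rewrite /h; have := odd_double_half m; lia.
apply; rewrite card_torus; case: (j != j'); nia.
Qed.

Lemma column_broadcast_minimal : minimal_dominating G column_broadcast.
Proof.
apply/and3P; split.
- apply/forallP => -[a b]; rewrite /column_broadcast /=; case: eqP => // ->.
  apply: leq_trans (dist_le_ecc G _ (ih, b)).
  by have := dist_column_lb b b; rewrite eqxx addn0.
- apply/forallP => -[a b]; apply/existsP; exists (i0, b).
  rewrite /column_broadcast /= ?eqxx h_gt0 /=.
  have [k le_k w] := cycle_walk_half m_gt0 a i0.
  have lt_k : k < #|{: 'I_m * 'I_n}|.
    by rewrite card_torus (leq_ltn_trans le_k) // (leq_trans h_lt_m) // leq_pmulr.
  exact: leq_trans (dist_le_walk (walk_cart_prodl (cycle_rel n) b w) lt_k) le_k.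
- apply/forallP => -[a b]; apply/implyP; rewrite /column_broadcast /=.
  case: eqP => [-> _ | _]; last by rewrite ltnn.
  apply/negP => /forallP /(_ (ih, b)) /existsP[[c d]].
  rewrite /decr_at /column_broadcast (dist_sym torus_sym) /=.
  case: eqP => [[-> ->] | ne_cd]; first by have := dist_column_lb b b; lia.
  case: eqP => [c0 | _]; last by rewrite ltnn.
  have ne_db : d != b by apply/eqP => db; apply: ne_cd; rewrite c0 db.
  by have := dist_column_lb b d; rewrite c0 eq_sym ne_db; lia.
Qed.

Lemma bcost_column_broadcast : bcost column_broadcast = n * h.
Proof.
rewrite /bcost -(pair_big xpredT xpredT (fun i j => column_broadcast (i, j))) /=.
rewrite (bigD1 i0) //= [X in _ + X]big1 => [|i ne_i0].
  by rewrite addn0 /column_broadcast /= ?eqxx sum_nat_const card_ord.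
by apply: big1 => j _; rewrite /column_broadcast /= (negbTE ne_i0).
Qed.

Lemma diam_torus_lt_Gamma_b : diam G < Gamma_b G.
Proof.
apply: leq_trans (bcost_le_Gamma_b column_broadcast_minimal).
rewrite bcost_column_broadcast; apply: leq_ltn_trans diam_torus_le _.
by rewrite -/h; have := odd_double_half n; nia.
Qed.

End Torus.

Theorem mainTheorem13 (m n : nat) :
  3 <= m -> 3 <= n -> ~ diametrical (torus m n).
Proof.
move=> m_ge3 n_ge3; rewrite /diametrical => Gamma_eq.
by have := diam_torus_lt_Gamma_b m_ge3 n_ge3; rewrite Gamma_eq ltnn.
Qed.
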